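(* Let $(p_m)$ and $(q_n)$ belong to $SVA_{reg(\alpha)}$ (for some $\alpha\ge0$), and let $(u_{mn})$ be a double sequence of complex numbers that is $(\overline{N},p,q)$ summable to a number $\ell$. If $(u_{mn})$ is slowly oscillating relative to $(P_m)$, slowly oscillating relative to $(Q_n)$, and slowly oscillating relative to $(P_m)$ or relative to $(Q_n)$ in the strong sense, then $(u_{mn})$ is $P$-convergent to $\ell$.
   Context: Weights: $(p_m)_{m\ge0},(q_n)_{n\ge0}$ are sequences of positive reals with $P_m=\sum_{i=0}^m p_i\to\infty$ and $Q_n=\sum_{j=0}^n q_j\to\infty$. $SVA_{reg(\alpha)}$ denotes the set of positive sequences $(p_m)$ whose partial sums have the form $P_m=(m+1)^{\alpha}L(m)$ ($m\ge0$) with a constant $\alpha\ge0$ and a slowly varying function $L$ on $(0,\infty)$, i.e. $L$ positive, measurable, and $L(\lambda t)/L(t)\to1$ as $t\to\infty$ for every $\lambda>0$. The weighted means are $\sigma_{mn}=\frac{1}{P_mQ_n}\sum_{i=0}^m\sum_{j=0}^n p_iq_ju_{ij}$; $(u_{mn})$ is $(\overline{N},p,q)$ summable to $\ell$ if $(\sigma_{mn})$ is $P$-convergent to $\ell$. A double sequence $(a_{mn})$ is $P$-convergent to $\ell$ if for every $\epsilon>0$ there is $n_0$ with $|a_{mn}-\ell|<\epsilon$ whenever $m,n\ge n_0$. For a real double array $(a_{mn})$, $\limsup_{m,n\to\infty}a_{mn}=\lim_{N\to\infty}\sup_{m,n\ge N}a_{mn}$. In the maxima below, $i,j$ range over nonnegative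 integers satisfying the constraints. A complex double sequence $(u_{mn})$ is: - slowly oscillating relative to $(P_m)$ if $\lim_{\lambda\to1^+}\limsup_{m,n\to\infty}\max_{P_m\le P_i\le\lambda P_m}|u_{in}-u_{mn}|=0$; - slowly oscillating relative to $(Q_n)$ if $\lim_{\kappa\to1^+}\limsup_{m,n\to\infty}\max_{Q_n\le Q_j\le\kappa Q_n}|u_{mj}-u_{mn}|=0$; - slowly oscillating relative to $(P_m)$ in the strong sense if $\lim_{\lambda,\kappa\to1^+}\limsup_{m,n\to\infty}\max_{P_m\le P_i\le\lambda P_m,\ Q_n\le Q_j\le\kappa Q_n}|u_{ij}-u_{mj}|=0$; - slowly oscillating relative to $(Q_n)$ in the strong sense if $\lim_{\lambda,\kappa\to1^+}\limsup_{m,n\to\infty}\max_{P_m\le P_i\le\lambda P_m,\ Q_n\le Q_j\le\kappa Q_n}|u_{ij}-u_{in}|=0$. *)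

From HB Require Import structures.
From mathcomp Require Import all_boot all_order all_algebra.
From mathcomp Require Import all_classical all_reals all_analysis.
From mathcomp Require Import complex.
Set Implicit Arguments. Unset Strict Implicit. Unset Printing Implicit Defensive.
Import Order.TTheory GRing.Theory Num.Theory.
Import numFieldNormedType.Exports.
Local Open Scope classical_set_scope.
Local Open Scope ring_scope.


Section Defs.
Variable R : realType.

Definition cabs (z : R[i]) : R := ComplexField.Normc.normc z.

Definition psum (p : nat -> R) (m : nat) : R := \sum_(i < m.+1) p i.

Definition slowly_varying (L : R -> R) : Prop :=
  [/\ (forall t : R, 0 < t -> 0 < L t),
      measurable_fun (`]0, +oo[%classic : set R) L &
      forall lam : R, 0 < lam -> (L (lam * t) / L t) @[t --> +oo] --> (1 : R)].

Definition SVA_reg (alpha : R) (p : nat -> R) : Prop :=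
  (forall m, 0 < p m) /\
  exists L : R -> R, slowly_varying L /\
    forall m : nat, psum p m = (m%:R + 1) `^ alpha * L m%:R.

Definition wmean (p q : nat -> R) (u : nat -> nat -> R[i]) (m n : nat) : R[i] :=
  ((psum p m * psum q n)^-1)%:C%C *
    \sum_(i < m.+1) \sum_(j < n.+1) ((p i * q j)%:C%C * u i j).

Definition Pconv (a : nat -> nat -> R[i]) (l : R[i]) : Prop :=
  forall eps : R, 0 < eps -> exists n0 : nat,
    forall m n : nat, (n0 <= m)%N -> (n0 <= n)%N -> cabs (a m n - l) < eps.

Definition NPQ_summable (p q : nat -> R) (u : nat -> nat -> R[i]) (l : R[i]) :=
  Pconv (wmean p q u) l.

Definition dlimsup (a : nat -> nat -> \bar R) : \bar R :=
  limn (fun N : nat =>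
    ereal_sup [set x | exists m n : nat, [/\ (N <= m)%N, (N <= n)%N & x = a m n]]).

Definition oscP (p : nat -> R) (u : nat -> nat -> R[i]) (lam : R) (m n : nat) : \bar R :=
  ereal_sup [set x | exists i : nat,
    [/\ psum p m <= psum p i, psum p i <= lam * psum p m & x = (cabs (u i n - u m n))%:E]].

Definition oscQ (q : nat -> R) (u : nat -> nat -> R[i]) (kap : R) (m n : nat) : \bar R :=
  ereal_sup [set x | exists j : nat,
    [/\ psum q n <= psum q j, psum q j <= kap * psum q n & x = (cabs (u m j - u m n))%:E]].

Definition slowly_osc_P (p : nat -> R) (u : nat -> nat -> R[i]) : Prop :=
  dlimsup (oscP p u lam) @[lam --> 1^'+] --> 0%E.

Definition slowly_osc_Q (q : nat -> R) (u : nat -> nat -> R[i]) : Prop :=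
  dlimsup (oscQ q u kap) @[kap --> 1^'+] --> 0%E.

Definition oscP_strong (p q : nat -> R) (u : nat -> nat -> R[i]) (lam kap : R)
  (m n : nat) : \bar R :=
  ereal_sup [set x | exists i j : nat,
    [/\ psum p m <= psum p i <= lam * psum p m,
        psum q n <= psum q j <= kap * psum q n
      & x = (cabs (u i j - u m j))%:E]].

Definition oscQ_strong (p q : nat -> R) (u : nat -> nat -> R[i]) (lam kap : R)
  (m n : nat) : \bar R :=
  ereal_sup [set x | exists i j : nat,
    [/\ psum p m <= psum p i <= lam * psum p m,
        psum q n <= psum q j <= kap * psum q n
      & x = (cabs (u i j - u i n))%:E]].

Definition slowly_osc_P_strong (p q : nat -> R) (u : nat -> nat -> R[i]) : Prop :=
  (fun lk : R * R => dlimsup (oscP_strong p q u lk.1 lk.2))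
    @ filter_prod (1^'+) (1^'+) --> 0%E.

Definition slowly_osc_Q_strong (p q : nat -> R) (u : nat -> nat -> R[i]) : Prop :=
  (fun lk : R * R => dlimsup (oscQ_strong p q u lk.1 lk.2))
    @ filter_prod (1^'+) (1^'+) --> 0%E.

End Defs.

From HB Require Import structures.
From mathcomp Require Import all_boot all_order all_algebra.
From mathcomp Require Import all_classical all_reals all_analysis.
From mathcomp Require Import complex.
From mathcomp Require Import ring lra zify.
Set Implicit Arguments. Unset Strict Implicit. Unset Printing Implicit Defensive.
Import Order.TTheory GRing.Theory Num.Theory.
Import numFieldNormedType.Exports.
Local Open Scope classical_set_scope.
Local Open Scope ring_scope.

(* Regular variation of P forces P_(m+1) / P_m -> 1, so for every lam > 1 and
   large m there is k >= m with (lam + 1) / 2 * P_m <= P_k <= lam * P_m; likewise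
   for Q.  On the rectangle (m, k] x (n, k'] the weighted sum of u_ij - l is, by
   inclusion-exclusion, a combination of four weighted means sigma - l, which are
   small, and it differs from (P_k - P_m) (Q_k' - Q_n) (u_mn - l) by a sum controlled
   by |u_ij - u_mn|, which the oscillation hypotheses make uniformly small.  Since
   the rectangle's weight is comparable to P_m Q_n, |u_mn - l| is small. *)

Section ComplexModulus.
Variable R : realType.
Implicit Types x y z : R[i].

Lemma cabsD x y : cabs (x + y) <= cabs x + cabs y.
Proof. exact: le_normcD. Qed.

Lemma cabsN x : cabs (- x) = cabs x.
Proof. exact: normcN. Qed.

Lemma cabsM x y : cabs (x * y) = cabs x * cabs y.
Proof. exact: ComplexField.Normc.normcM. Qed.

Lemma cabs_real (c : R) : cabs c%:C%C = `|c|.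
Proof. by rewrite /cabs /= expr0n /= addr0 sqrtr_sqr. Qed.

Lemma cabs_subr_trans x y z : cabs (x - y) <= cabs (x - z) + cabs (z - y).
Proof.
have -> : x - y = (x - z) + (z - y) by rewrite addrA subrK.
exact: cabsD.
Qed.

Lemma cabs_sum (I : Type) (r : seq I) (F : I -> R[i]) :
  cabs (\sum_(i <- r) F i) <= \sum_(i <- r) cabs (F i).
Proof.
elim: r => [|a r IH]; first by rewrite !big_nil /cabs ComplexField.Normc.normc0.
by rewrite !big_cons (le_trans (cabsD _ _)) // lerD2l.
Qed.

End ComplexModulus.

Section PartialSums.
Variables (R : realType) (p : nat -> R).

Lemma psum_nat m : psum p m = \sum_(0 <= i < m.+1) p i.
Proof. by rewrite /psum big_mkord. Qed.

Lemma psumB m k : (m <= k)%N -> psum p k - psum p m = \sum_(m.+1 <= i < k.+1) p i.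
Proof. by move=> mk; rewrite !psum_nat (@big_cat_nat _ _ _ m.+1) // addrC addKr. Qed.

Hypothesis p_gt0 : forall m, 0 < p m.

Lemma psum_gt0 m : 0 < psum p m.
Proof.
rewrite /psum big_ord_recl (lt_le_trans (p_gt0 0)) // lerDl.
by rewrite sumr_ge0 // => i _; apply: ltW.
Qed.

Lemma psum_le {m k} : (m <= k)%N -> psum p m <= psum p k.
Proof. by move=> mk; rewrite -subr_ge0 psumB // sumr_ge0 // => i _; apply: ltW. Qed.

Lemma psum_bracket : psum p n @[n --> \oo] --> +oo ->
  forall m T, psum p m <= T -> exists k, [/\ (m <= k)%N, psum p k <= T & T < psum p k.+1].
Proof.
move=> /cvgryPgt P_oo m T PmT.
have [j /= PTj] := filter_ex (P_oo T).
have [[|k] PTk k_min] := @ex_minnP (fun j => T < psum p j) (ex_intro _ j PTj).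
  by have := le_lt_trans (le_trans (psum_le (leq0n m)) PmT) PTk; rewrite ltxx.
exists k; split=> //.
- rewrite leqNgt; apply/negP => km.
  by have := le_lt_trans (le_trans (psum_le km) PmT) PTk; rewrite ltxx.
- by rewrite leNgt; apply/negP => /k_min; rewrite ltnn.
Qed.

End PartialSums.

Definition psum_windows (R : realType) (p : nat -> R) :=
  forall lam, 1 < lam -> exists N, forall m, (N <= m)%N -> exists k,
    [/\ (m <= k)%N, (lam + 1) * psum p m <= 2 * psum p k & psum p k <= lam * psum p m].

Section RegularVariation.
Variables (R : realType) (alpha : R) (p : nat -> R).
Hypotheses (alpha_ge0 : 0 <= alpha) (p_sva : SVA_reg alpha p).

Lemma powR_dilation_le s : 1 < s -> exists2 K, (0 < K)%N & (K.+1%:R / K%:R) `^ alpha <= s.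
Proof.
move=> s1; have lns_gt0 : 0 < ln s by apply: ln_gt0.
pose K := (Num.Def.archi_bound (alpha / ln s)).+1.
have K_gt0 : 0 < K%:R :> R by rewrite ltr0n.
exists K => //.
have alphaK : alpha / K%:R <= ln s.
  rewrite ler_pdivrMr // mulrC -ler_pdivrMr //; apply: ltW.
  apply: lt_le_trans (archi_boundP (divr_ge0 alpha_ge0 (ltW lns_gt0))) _.
  by rewrite ler_nat leqnSn.
have lamK : K.+1%:R / K%:R = 1 + K%:R^-1 :> R.
  by rewrite -addn1 natrD mulrDl divff ?gt_eqF // mul1r.
have lam_gt0 : 0 < 1 + K%:R^-1 :> R by rewrite addr_gt0 ?invr_gt0.
rewrite lamK /powR gt_eqF // -[s]lnK ?posrE ?(lt_trans ltr01) // ler_expR.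
apply: le_trans alphaK; rewrite ler_wpM2l // le_ln1Dx //.
by apply: (@lt_trans _ _ 0); rewrite ?invr_gt0 // ltrN10.
Qed.

Lemma SVA_psum_dilate {K s} : (0 < K)%N -> 1 < s ->
  exists J, forall j, (J <= j)%N ->
    psum p (K.+1 * j) <= s * (K.+1%:R / K%:R) `^ alpha * psum p (K * j).
Proof.
move=> K_gt0 s1; case: p_sva => _ [L [[L_gt0 _ L_sv] P_L]].
pose lam : R := K.+1%:R / K%:R.
have K_gt0R : 0 < K%:R :> R by rewrite ltr0n.
have lam_ge1 : 1 <= lam by rewrite /lam ler_pdivlMr // mul1r ler_nat.
have lam_gt0 : 0 < lam := lt_le_trans ltr01 lam_ge1.
have [M [M_real LM]] := cvgr_lt 1 (L_sv lam lam_gt0) s s1.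
exists (Num.Def.archi_bound `|M|).+1 => j Jj.
rewrite !P_L; set t : R := (K * j)%:R.
have t_gt0 : 0 < t by rewrite ltr0n muln_gt0 K_gt0 (leq_trans _ Jj).
have Mt : M < t.
  apply: le_lt_trans (real_ler_norm M_real) _.
  apply: lt_le_trans (archi_boundP (normr_ge0 M)) _.
  by rewrite ler_nat (leq_trans (leqnSn _) (leq_trans Jj (leq_pmull _ K_gt0))).
have -> : (K.+1 * j)%:R = lam * t :> R.
  by rewrite /lam /t !natrM; field; rewrite gt_eqF.
have L_lam : L (lam * t) <= s * L t.
  by have := LM t Mt; rewrite ltr_pdivrMr ?L_gt0 // => /ltW.
have pow_lam : (lam * t + 1) `^ alpha <= lam `^ alpha * (t + 1) `^ alpha.
  rewrite -powRM ?ler0n ?(ltW lam_gt0) //; last by rewrite addr_ge0 ?ltW.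
  apply: ge0_ler_powR => //; rewrite ?nnegrE; try nra.
apply: le_trans (ler_pM _ _ pow_lam L_lam) _.
- by rewrite powR_ge0.
- exact/ltW/L_gt0/mulr_gt0.
- by rewrite /lam le_eqVlt; apply/orP; left; apply/eqP; ring.
Qed.

Lemma SVA_psum_succ_le r : 1 < r ->
  exists N, forall i, (N <= i)%N -> psum p i.+1 <= r * psum p i.
Proof.
move=> r1; pose s := Num.sqrt r.
have s1 : 1 < s by rewrite /s -sqrtr1 ltr_sqrt //; lra.
have ss : s * s = r by rewrite -expr2 sqr_sqrtr //; lra.
have p_gt0 := p_sva.1.
have [K K_gt0 powK] := powR_dilation_le s1.
have [J HJ] := SVA_psum_dilate K_gt0 s1.
exists (K * (J + K))%N => n n_ge; pose j := (n %/ K)%N.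
have Kj_le : (K * j <= n)%N by rewrite mulnC leq_trunc_div.
have n_lt : (n < j.+1 * K)%N by rewrite ltn_ceil.
have JKj : (J + K <= j)%N by have := leq_div2r K n_ge; rewrite mulKn.
have n1_le : (n.+1 <= K.+1 * j)%N by nia.
apply: le_trans (psum_le p_gt0 n1_le) _.
apply: le_trans (HJ j (leq_trans (leq_addr _ _) JKj)) _.
have s_gt0 : 0 < s := lt_trans ltr01 s1.
rewrite -ss; apply: ler_pM.
- by rewrite mulr_ge0 ?powR_ge0 ?ltW.
- exact/ltW/psum_gt0.
- by rewrite ler_pM2l.
- exact: psum_le.
Qed.

Lemma SVA_psum_windows : psum p n @[n --> \oo] --> +oo -> psum_windows p.
Proof.
move=> P_oo lam lam1; have p_gt0 := p_sva.1.
have [N HN] := @SVA_psum_succ_le (2 * lam / (lam + 1)) ltac:(rewrite ltr_pdivlMr; lra).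
exists N => m Nm; have Pm_gt0 := psum_gt0 p_gt0 m.
have [k [mk Pk Pk1]] := psum_bracket p_gt0 P_oo (ler_peMl (ltW Pm_gt0) (ltW lam1)).
exists k; split=> //.
have := lt_le_trans Pk1 (HN k (leq_trans Nm mk)).
rewrite mulrAC ltr_pdivlMr; last lra.
by have := psum_gt0 p_gt0 k; nra.
Qed.

End RegularVariation.

Lemma dlimsup_lt (R : realType) (a : nat -> nat -> \bar R) (x : R) :
  (dlimsup a < x%:E)%E ->
  exists N, forall m n, (N <= m)%N -> (N <= n)%N -> (a m n < x%:E)%E.
Proof.
set s := fun N : nat => ereal_sup [set y | exists m n : nat,
  [/\ (N <= m)%N, (N <= n)%N & y = a m n]].
have s_nonincr : {homo s : N M / (N <= M)%N >-> (M <= N)%E}.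
  move=> N M NM; apply: ereal_sup_le => _ [m [n [Mm Mn ->]]].
  by exists m, n; rewrite (leq_trans NM Mm) (leq_trans NM Mn).
rewrite /dlimsup (cvg_lim (@ereal_hausdorff R) (ereal_nonincreasing_cvgn s_nonincr)).
move=> /ereal_inf_lt [_ [N _ <-]] sN.
exists N => m n Nm Nn; apply: le_lt_trans sN.
by apply: ereal_sup_ubound; exists m, n.
Qed.

Lemma slowly_osc_near (R : realType) (f : R -> nat -> nat -> \bar R) (d : R) :
  0 < d -> dlimsup (f x) @[x --> 1^'+] --> 0%E ->
  \forall x \near 1^'+, exists N, forall m n, (N <= m)%N -> (N <= n)%N ->
    (f x m n < d%:E)%E.
Proof.
move=> d_gt0 osc.
have osc_d : \forall x \near 1^'+, (dlimsup (f x) < d%:E)%E.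
  exact: osc _ (nbhs_open_ereal_lt (f := fun=> d) d_gt0).
by apply: filterS osc_d => x /dlimsup_lt.
Qed.

Lemma slowly_osc2_near (R : realType) (f : R -> R -> nat -> nat -> \bar R) (d : R) :
  0 < d -> (fun lk : R * R => dlimsup (f lk.1 lk.2)) @ filter_prod (1^'+) (1^'+) --> 0%E ->
  exists A B, [/\ (\forall x \near 1^'+, A x), (\forall y \near 1^'+, B y) &
    forall x y, A x -> B y -> exists N, forall m n, (N <= m)%N -> (N <= n)%N ->
      (f x y m n < d%:E)%E].
Proof.
move=> d_gt0 /(_ _ (nbhs_open_ereal_lt (f := fun=> d) d_gt0)) [[A B] /= [nA nB] AB].
by exists A, B; split=> // x y Ax By; apply: dlimsup_lt (AB (x, y) _).
Qed.

Section Oscillation.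
Variables (R : realType) (p q : nat -> R) (u : nat -> nat -> R[i]).

Definition osc_rect_le (lam kap d : R) (N : nat) :=
  forall m n i j, (N <= m)%N -> (N <= n)%N ->
    psum p m <= psum p i <= lam * psum p m ->
    psum q n <= psum q j <= kap * psum q n ->
    cabs (u i j - u m n) <= d.

Lemma oscP_ub lam m n i : psum p m <= psum p i <= lam * psum p m ->
  ((cabs (u i n - u m n))%:E <= oscP p u lam m n)%E.
Proof. by case/andP=> Pmi Pim; apply: ereal_sup_ubound; exists i. Qed.

Lemma oscQ_ub kap m n j : psum q n <= psum q j <= kap * psum q n ->
  ((cabs (u m j - u m n))%:E <= oscQ q u kap m n)%E.
Proof. by case/andP=> Qnj Qjn; apply: ereal_sup_ubound; exists j. Qed.

Lemma oscP_strong_ub lam kap m n i j :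
  psum p m <= psum p i <= lam * psum p m -> psum q n <= psum q j <= kap * psum q n ->
  ((cabs (u i j - u m j))%:E <= oscP_strong p q u lam kap m n)%E.
Proof. by move=> Pi Qj; apply: ereal_sup_ubound; exists i, j. Qed.

Lemma oscQ_strong_ub lam kap m n i j :
  psum p m <= psum p i <= lam * psum p m -> psum q n <= psum q j <= kap * psum q n ->
  ((cabs (u i j - u i n))%:E <= oscQ_strong p q u lam kap m n)%E.
Proof. by move=> Pi Qj; apply: ereal_sup_ubound; exists i, j. Qed.

Lemma osc_rect_of_strongP : slowly_osc_Q q u -> slowly_osc_P_strong p q u ->
  forall d, 0 < d -> exists lam kap N, [/\ 1 < lam, 1 < kap & osc_rect_le lam kap d N].
Proof.
move=> oQ oS d d_gt0; have d2_gt0 : 0 < d / 2 by rewrite divr_gt0.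
have [A [B [nA nB AB]]] := slowly_osc2_near d2_gt0 oS.
have [lam [lam1 Alam]] := filter_ex (filterI (nbhs_right_gt 1) nA).
have [kap [[kap1 Bkap] [N2 HN2]]] :=
  filter_ex (filterI (filterI (nbhs_right_gt 1) nB) (slowly_osc_near d2_gt0 oQ)).
have [N1 HN1] := AB _ _ Alam Bkap.
exists lam, kap, (maxn N1 N2); split=> // m n i j.
rewrite !geq_max => /andP[N1m N2m] /andP[N1n N2n] Pi Qj.
have := le_lt_trans (oscP_strong_ub Pi Qj) (HN1 m n N1m N1n).
have := le_lt_trans (oscQ_ub m Qj) (HN2 m n N2m N2n).
rewrite !lte_fin => ? ?.
by apply: le_trans (cabs_subr_trans _ _ (u m j)) _; lra.
Qed.

Lemma osc_rect_of_strongQ : slowly_osc_P p u -> slowly_osc_Q_strong p q u ->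
  forall d, 0 < d -> exists lam kap N, [/\ 1 < lam, 1 < kap & osc_rect_le lam kap d N].
Proof.
move=> oP oS d d_gt0; have d2_gt0 : 0 < d / 2 by rewrite divr_gt0.
have [A [B [nA nB AB]]] := slowly_osc2_near d2_gt0 oS.
have [lam [[lam1 Alam] [N2 HN2]]] :=
  filter_ex (filterI (filterI (nbhs_right_gt 1) nA) (slowly_osc_near d2_gt0 oP)).
have [kap [kap1 Bkap]] := filter_ex (filterI (nbhs_right_gt 1) nB).
have [N1 HN1] := AB _ _ Alam Bkap.
exists lam, kap, (maxn N1 N2); split=> // m n i j.
rewrite !geq_max => /andP[N1m N2m] /andP[N1n N2n] Pi Qj.
have := le_lt_trans (oscQ_strong_ub Pi Qj) (HN1 m n N1m N1n).
have := le_lt_trans (oscP_ub n Pi) (HN2 m n N2m N2n).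
rewrite !lte_fin => ? ?.
by apply: le_trans (cabs_subr_trans _ _ (u i n)) _; lra.
Qed.

End Oscillation.

Lemma lt_of_rect_estimate (R : realType) (lam kap A a B b x e : R) :
  1 < lam -> 1 < kap -> 0 < A -> 0 < B -> 0 < e ->
  (lam + 1) * A <= 2 * a -> a <= lam * A ->
  (kap + 1) * B <= 2 * b -> b <= kap * B ->
  (a - A) * (b - B) * x <=
    e * (lam - 1) * (kap - 1) / (16 * (lam + 1) * (kap + 1)) *
      (a * b + A * b + a * B + A * B) + (a - A) * (b - B) * (e / 2) ->
  x < e.
Proof.
move=> lam1 kap1 A_gt0 B_gt0 e_gt0 aA1 aA2 bB1 bB2.
set ep := e * (lam - 1) * (kap - 1) / _ => est.
have ep_ge0 : 0 <= ep by rewrite /ep divr_ge0 ?mulr_ge0 //; lra.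
have ab_gt0 : 0 < (a - A) * (b - B) by rewrite mulr_gt0 //; nra.
have ab_ge : (lam - 1) * A * ((kap - 1) * B) <= 2 * (a - A) * (2 * (b - B)).
  by rewrite ler_pM ?mulr_ge0 //; lra.
have ab_le : (a + A) * (b + B) <= (lam + 1) * A * ((kap + 1) * B).
  by rewrite ler_pM //; lra.
have ep_ab : ep * ((lam + 1) * A * ((kap + 1) * B)) =
    e * ((lam - 1) * A * ((kap - 1) * B)) / 16.
  by rewrite /ep; field; apply/andP; split; lra.
(* the window conditions make the first term at most [e/4 (a - A)(b - B)] *)
have first_le : ep * (a * b + A * b + a * B + A * B) <= e / 4 * ((a - A) * (b - B)).
  have -> : a * b + A * b + a * B + A * B = (a + A) * (b + B) by ring.
  apply: le_trans (ler_wpM2l ep_ge0 ab_le) _; rewrite ep_ab.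
  by have := ler_wpM2l (ltW e_gt0) ab_ge; lra.
have : (a - A) * (b - B) * x <= (a - A) * (b - B) * (3 * e / 4).
  apply: le_trans est _.
  have -> : (a - A) * (b - B) * (3 * e / 4) =
    e / 4 * ((a - A) * (b - B)) + (a - A) * (b - B) * (e / 2) by field.
  by rewrite lerD2r.
by rewrite ler_pM2l //; lra.
Qed.

Section Tauberian.
Variables (R : realType) (p q : nat -> R) (u : nat -> nat -> R[i]) (l : R[i]).
Hypotheses (p_gt0 : forall m, 0 < p m) (q_gt0 : forall n, 0 < q n).

Let dev a b := \sum_(0 <= i < a.+1) \sum_(0 <= j < b.+1) (p i * q j)%:C%C * (u i j - l).

Lemma dev_wmean a b : dev a b = (psum p a * psum q b)%:C%C * (wmean p q u a b - l).
Proof.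
have PQ_neq0 : psum p a * psum q b != 0 by rewrite mulf_neq0 // gt_eqF // psum_gt0.
rewrite /dev /wmean mulrBr mulrA -rmorphM mulfV // rmorph1 mul1r.
have -> : (psum p a * psum q b)%:C%C * l =
    \sum_(0 <= i < a.+1) \sum_(0 <= j < b.+1) (p i * q j)%:C%C * l.
  rewrite !psum_nat mulr_suml rmorph_sum mulr_suml; apply: eq_bigr => i _.
  by rewrite mulr_sumr rmorph_sum mulr_suml.
rewrite [in RHS]big_mkord -sumrB big_mkord; apply: eq_bigr => i _.
by rewrite [in RHS]big_mkord -sumrB big_mkord; apply: eq_bigr => j _; rewrite mulrBr.
Qed.

Lemma dev_rect m k n k2 : (m <= k)%N -> (n <= k2)%N ->
  dev k k2 - dev m k2 - dev k n + dev m n =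
  \sum_(m.+1 <= i < k.+1) \sum_(n.+1 <= j < k2.+1) (p i * q j)%:C%C * (u i j - l).
Proof.
move=> mk nk2; rewrite /dev.
set G := fun b i => \sum_(0 <= j < b.+1) (p i * q j)%:C%C * (u i j - l).
rewrite -/(G k2) -/(G n) !(@big_cat_nat _ _ _ m.+1 0 k.+1) //=.
have -> : forall x y z t : R[i], x + y - x - (z + t) + z = y - t by move=> *; ring.
rewrite -sumrB; apply: eq_bigr => i _.
by rewrite /G (@big_cat_nat _ _ _ n.+1 0 k2.+1) //= addrC addrK.
Qed.

Lemma sum_rect_weights m k n k2 : (m <= k)%N -> (n <= k2)%N ->
  \sum_(m.+1 <= i < k.+1) \sum_(n.+1 <= j < k2.+1) (p i * q j) =
  (psum p k - psum p m) * (psum q k2 - psum q n).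
Proof.
by move=> mk nk2; rewrite !psumB // mulr_suml; apply: eq_bigr => i _; rewrite mulr_sumr.
Qed.

Lemma rect_identity m k n k2 : (m <= k)%N -> (n <= k2)%N ->
  ((psum p k - psum p m) * (psum q k2 - psum q n))%:C%C * (u m n - l) =
  dev k k2 - dev m k2 - dev k n + dev m n -
  \sum_(m.+1 <= i < k.+1) \sum_(n.+1 <= j < k2.+1) (p i * q j)%:C%C * (u i j - u m n).
Proof.
move=> mk nk2; rewrite dev_rect // -sum_rect_weights // -sumrB rmorph_sum mulr_suml.
apply: eq_bigr => i _; rewrite -sumrB rmorph_sum mulr_suml.
by apply: eq_bigr => j _; rewrite -mulrBr; congr (_ * _); ring.
Qed.

Lemma cabs_dev_le a b ep : cabs (wmean p q u a b - l) <= ep ->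
  cabs (dev a b) <= psum p a * psum q b * ep.
Proof.
have PQ_gt0 : 0 < psum p a * psum q b by rewrite mulr_gt0 // psum_gt0.
by move=> dev_ep; rewrite dev_wmean cabsM cabs_real gtr0_norm // ler_pM2l.
Qed.

Lemma cabs_rect_osc_le m k n k2 d : (m <= k)%N -> (n <= k2)%N ->
  (forall i j, (m < i <= k)%N -> (n < j <= k2)%N -> cabs (u i j - u m n) <= d) ->
  cabs (\sum_(m.+1 <= i < k.+1) \sum_(n.+1 <= j < k2.+1)
      (p i * q j)%:C%C * (u i j - u m n)) <=
  (psum p k - psum p m) * (psum q k2 - psum q n) * d.
Proof.
move=> mk nk2 osc; rewrite -sum_rect_weights // mulr_suml.
apply: le_trans (cabs_sum _ _) _; apply: ler_sum_nat => i /andP[mi ik].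
rewrite mulr_suml; apply: le_trans (cabs_sum _ _) _.
apply: ler_sum_nat => j /andP[nj jk2].
have pq_ge0 : 0 <= p i * q j by rewrite mulr_ge0 // ltW.
by rewrite cabsM cabs_real ger0_norm // ler_wpM2l // osc ?mi ?nj.
Qed.

Lemma rect_estimate m k n k2 d ep : (m <= k)%N -> (n <= k2)%N ->
  (forall a b, (m <= a)%N -> (n <= b)%N -> cabs (wmean p q u a b - l) <= ep) ->
  (forall i j, (m < i <= k)%N -> (n < j <= k2)%N -> cabs (u i j - u m n) <= d) ->
  (psum p k - psum p m) * (psum q k2 - psum q n) * cabs (u m n - l) <=
  ep * (psum p k * psum q k2 + psum p m * psum q k2 + psum p k * psum q n +
        psum p m * psum q n) +
  (psum p k - psum p m) * (psum q k2 - psum q n) * d.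
Proof.
move=> mk nk2 wmean_ep osc.
have D_ge0 : 0 <= (psum p k - psum p m) * (psum q k2 - psum q n).
  by rewrite mulr_ge0 // subr_ge0 psum_le.
rewrite -[X in X * cabs _]ger0_norm // -cabs_real -cabsM rect_identity //.
have cabs5 (x1 x2 x3 x4 x5 : R[i]) :
    cabs (x1 - x2 - x3 + x4 - x5) <= cabs x1 + cabs x2 + cabs x3 + cabs x4 + cabs x5.
  apply: le_trans (cabsD _ _) _; rewrite cabsN lerD2r.
  apply: le_trans (cabsD _ _) _; rewrite lerD2r.
  apply: le_trans (cabsD _ _) _; rewrite cabsN lerD2r.
  by apply: le_trans (cabsD _ _) _; rewrite cabsN.
apply: le_trans (cabs5 _ _ _ _ _) _.
have := cabs_dev_le (wmean_ep k k2 mk nk2).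
have := cabs_dev_le (wmean_ep m k2 (leqnn m) nk2).
have := cabs_dev_le (wmean_ep k n mk (leqnn n)).
have := cabs_dev_le (wmean_ep m n (leqnn m) (leqnn n)).
have := cabs_rect_osc_le mk nk2 osc.
lra.
Qed.

Hypotheses (p_windows : psum_windows p) (q_windows : psum_windows q).

Lemma Pconv_of_osc_rect : NPQ_summable p q u l ->
  (forall d, 0 < d -> exists lam kap N, [/\ 1 < lam, 1 < kap & osc_rect_le p q u lam kap d N]) ->
  Pconv u l.
Proof.
move=> summ osc e e_gt0.
have [lam [kap [N [lam1 kap1 oscN]]]] := osc (e / 2) (divr_gt0 e_gt0 (ltr0Sn _ 1)).
have [Np HNp] := p_windows lam1.
have [Nq HNq] := q_windows kap1.
pose ep := e * (lam - 1) * (kap - 1) / (16 * (lam + 1) * (kap + 1)).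
have ep_gt0 : 0 < ep by rewrite /ep divr_gt0 ?mulr_gt0 //; lra.
have [n0 Hn0] := summ ep ep_gt0.
exists (maxn N (maxn Np (maxn Nq n0))) => m n.
rewrite !geq_max => /and4P[Nm Npm Nqm n0m] /and4P[Nn Npn Nqn n0n].
have [k [mk Pk1 Pk2]] := HNp m Npm.
have [k2 [nk2 Qk1 Qk2]] := HNq n Nqn.
apply: (lt_of_rect_estimate lam1 kap1 (psum_gt0 p_gt0 m) (psum_gt0 q_gt0 n) e_gt0
  Pk1 Pk2 Qk1 Qk2).
apply: rect_estimate => // [a b ma nb | i j /andP[mi ik] /andP[nj jk2]].
  by apply/ltW/Hn0; [apply: leq_trans ma | apply: leq_trans nb].
apply: oscN => //; apply/andP; split.
- exact/psum_le/ltnW.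
- exact: le_trans (psum_le p_gt0 ik) Pk2.
- exact/psum_le/ltnW.
- exact: le_trans (psum_le q_gt0 jk2) Qk2.
Qed.

End Tauberian.

Theorem theorem5p1 (R : realType) (alpha : R) (p q : nat -> R)
    (u : nat -> nat -> R[i]) (l : R[i]) :
  0 <= alpha ->
  (forall m, 0 < p m) -> (forall n, 0 < q n) ->
  psum p n @[n --> \oo] --> +oo ->
  psum q n @[n --> \oo] --> +oo ->
  SVA_reg alpha p -> SVA_reg alpha q ->
  NPQ_summable p q u l ->
  slowly_osc_P p u -> slowly_osc_Q q u ->
  slowly_osc_P_strong p q u \/ slowly_osc_Q_strong p q u ->
  Pconv u l.
Proof.
move=> alpha_ge0 p_gt0 q_gt0 P_oo Q_oo p_sva q_sva summ oscP oscQ osc_strong.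
apply: (Pconv_of_osc_rect p_gt0 q_gt0 (SVA_psum_windows alpha_ge0 p_sva P_oo)
  (SVA_psum_windows alpha_ge0 q_sva Q_oo) summ).
case: osc_strong => [oscPs | oscQs].
- exact: osc_rect_of_strongP.
- exact: osc_rect_of_strongQ.
Qed.
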